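(* In the setting below, any two correct processes are intertwined: for all $i,j\in W$, every quorum $Q$ of $i$ and every quorum $Q'$ of $j$ satisfy $|Q\cap Q'|>f$.
   Context: Processes and faults: $\Pi$ is a finite set of processes, $f\ge0$ a known integer; $W\subseteq\Pi$ is the set of correct processes and $F=\Pi\setminus W$ the Byzantine faulty processes, $|F|\le f$. Faulty processes may declare arbitrary slices. Slices and quorums: each process $i$ has a set $\mathcal{S}_i$ of slices (subsets of $\Pi$). $Q\subseteq\Pi$ is a quorum if every $i\in Q$ has some $S\in\mathcal{S}_i$ with $S\subseteq Q$; a quorum of $i$ is a quorum containing $i$. Two correct processes $i,j$ are intertwined if $|Q\cap Q'|>f$ for every quorum $Q$ of $i$ and every quorum $Q'$ of $j$. Knowledge graph: each process $i$ is given $\mathit{PD}_i\subseteq\Pi$; $G_{\mathit{di}}$ is the directed graph on $\Pi$ with edge $(i,j)$ iff $j\in\mathit{PD}_i$. A sink component is a strongly connected component of $G_{\mathit{di}}$ from which no path leads outside it. A directed graph is $k$-OSR if (1) its underlying undirected graph is connected; (2) its condensation into strongly connected components has exactly one sink $G_{\mathit{sink}}$; (3) $G_{\mathit{sink}}$ is $k$-strongly connected (every ordered pair of its nodes joined by $k$ node-disjoint directed paths); (4) from every node outside $G_{\mathit{sink}}$ to every node in it there are at least $k$ node-disjoint directed paths. Standing assumption: $G_{\mathit{di}}$ has a unique sink component with vertex set $V_{\mathit{sink}}$, which contains at least $2f+1$ correct processes, and the graph obtained from $G_{\mathit{di}}$ by deleting $F$ is $(f+1)$-OSR. Slice construction: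 let $m=\lceil (|V_{\mathit{sink}}|+f+1)/2\rceil$. Every correct $i\in V_{\mathit{sink}}$ has $\mathcal{S}_i=\{S\subseteq V_{\mathit{sink}}: |S|=m\}$. Every correct $i\notin V_{\mathit{sink}}$ is given a set $V_i\subseteq V_{\mathit{sink}}$ containing at least $f+1$ correct members of $V_{\mathit{sink}}$, and has $\mathcal{S}_i=\{S\subseteq V_i: |S|=f+1\}$. *)

From mathcomp Require Import all_boot.
Set Implicit Arguments. Unset Strict Implicit. Unset Printing Implicit Defensive.

Section Defs.
Variable T : finType.

Definition rrel (V : {set T}) (e : rel T) : rel T :=
  fun x y => [&& x \in V, y \in V & e x y].

Definition scc (V : {set T}) (e : rel T) (x : T) : {set T} :=
  [set y in V | connect (rrel V e) x y && connect (rrel V e) y x].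

Definition is_sink_component (V : {set T}) (e : rel T) (C : {set T}) : Prop :=
  (exists2 x, x \in V & C = scc V e x) /\
  (forall x y, x \in C -> connect (rrel V e) x y -> y \in C).

Definition undirected_connected (V : {set T}) (e : rel T) : Prop :=
  forall x y, x \in V -> y \in V ->
    connect (rrel V (fun a b => e a b || e b a)) x y.

(* A path is u :: rcons s v, with s its (duplicate-free) list of internal
   vertices; distinct paths have distinct and disjoint sets of internal
   vertices. *)
Definition disjoint_paths (V : {set T}) (e : rel T) (k : nat) (u v : T) : Prop :=
  exists ps : 'I_k -> seq T,
    (forall i, [/\ path (rrel V e) u (rcons (ps i) v), uniq (ps i),
                   u \notin ps i & v \notin ps i]) /\
    (forall i j, i != j -> ps i != ps j /\ [disjoint ps i & ps j]).

Definition k_OSR (V : {set T}) (e : rel T) (k : nat) : Prop :=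
  undirected_connected V e /\
  exists Gs : {set T},
    [/\ is_sink_component V e Gs,
        (forall C, is_sink_component V e C -> C = Gs),
        (forall u v, u \in Gs -> v \in Gs -> u != v -> disjoint_paths V e k u v)
      & (forall u v, u \in V :\: Gs -> v \in Gs -> disjoint_paths V e k u v)].

Definition is_quorum (S : T -> {set {set T}}) (Q : {set T}) : Prop :=
  forall i, i \in Q -> exists2 X, X \in S i & X \subset Q.

Definition intertwined (S : T -> {set {set T}}) (f : nat) (i j : T) : Prop :=
  forall Q Q' : {set T}, is_quorum S Q -> i \in Q -> is_quorum S Q' -> j \in Q' ->
    f < #|Q :&: Q'|.

End Defs.

From mathcomp Require Import all_boot.
From mathcomp Require Import zify.

Set Implicit Arguments.
Unset Strict Implicit.
Unset Printing Implicit Defensive.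

(* Every quorum of a correct process contains at least
   m = ceil((|V_sink| + f + 1) / 2) members of V_sink: directly if the process
   lies in V_sink, and otherwise because its slice of f + 1 members of V_i
   contains a correct sink process, whose own slice then lies in the quorum.
   Two subsets of V_sink with at least m elements each share at least
   2m - |V_sink| >= f + 1 processes. *)

Definition sink_slice_size (n f : nat) : nat := (n + f + 1).+1 %/ 2.

Lemma leq_double_sink_slice_size n f : n + f + 1 <= (sink_slice_size n f).*2.
Proof. by rewrite /sink_slice_size divn2 -uphalfE -leq_uphalf_double. Qed.

Lemma leq_card_setI (T : finType) (V A B : {set T}) :
  A \subset V -> B \subset V -> #|A| + #|B| <= #|V| + #|A :&: B|.
Proof.
move=> AV BV; rewrite -cardsUI leq_add2r.
by apply: subset_leq_card; rewrite subUset AV BV.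
Qed.

Lemma meet_of_card_gt_compl (T : finType) (W X : {set T}) :
  #|~: W| < #|X| -> exists2 x, x \in X & x \in W.
Proof.
move=> ltWX.
have /subsetPn[x xX]: ~~ (X \subset ~: W).
  by apply: contraTN ltWX => /subset_leq_card; rewrite leqNgt.
by rewrite inE negbK; exists x.
Qed.

Section SliceQuorums.

Variables (T : finType) (f : nat) (W Vsink : {set T}) (Vi : T -> {set T}).
Variable slices : T -> {set {set T}}.

Hypothesis faulty_le : #|~: W| <= f.

Hypothesis sink_slices : forall i, i \in W -> i \in Vsink ->
  slices i = [set X : {set T} | (X \subset Vsink) && (#|X| == sink_slice_size #|Vsink| f)].

Hypothesis outer_slices : forall i, i \in W -> i \notin Vsink ->
  Vi i \subset Vsink /\
  slices i = [set X : {set T} | (X \subset Vi i) && (#|X| == f + 1)].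

Lemma sink_quorum_meets_sink i Q :
  i \in W -> i \in Vsink -> is_quorum slices Q -> i \in Q ->
  sink_slice_size #|Vsink| f <= #|Vsink :&: Q|.
Proof.
move=> iW iV quorumQ iQ; have [X] := quorumQ i iQ.
rewrite sink_slices // inE => /andP[XV /eqP <-] XQ.
by apply: subset_leq_card; rewrite subsetI XV XQ.
Qed.

Lemma quorum_meets_sink i Q :
  i \in W -> is_quorum slices Q -> i \in Q ->
  sink_slice_size #|Vsink| f <= #|Vsink :&: Q|.
Proof.
move=> iW quorumQ iQ.
have [iV | iV] := boolP (i \in Vsink); first exact: (sink_quorum_meets_sink iW).
have [ViV slices_i] := outer_slices iW iV.
have [X] := quorumQ i iQ; rewrite slices_i inE => /andP[XVi /eqP cardX] XQ.
have [k kX kW] : exists2 k, k \in X & k \in W.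
  by apply: meet_of_card_gt_compl; rewrite cardX addn1 ltnS.
apply: (sink_quorum_meets_sink kW) => //; last exact: (subsetP XQ).
exact: subsetP ViV _ (subsetP XVi _ kX).
Qed.

Lemma correct_intertwined i j : i \in W -> j \in W -> intertwined slices f i j.
Proof.
move=> iW jW Q Q' quorumQ iQ quorumQ' jQ'.
have := quorum_meets_sink iW quorumQ iQ.
have := quorum_meets_sink jW quorumQ' jQ'.
have := leq_card_setI (subsetIl Vsink Q) (subsetIl Vsink Q').
have : #|(Vsink :&: Q) :&: (Vsink :&: Q')| <= #|Q :&: Q'|.
  by apply/subset_leq_card/setISS; apply: subsetIr.
have := leq_double_sink_slice_size #|Vsink| f; rewrite -addnn.
lia.
Qed.

End SliceQuorums.

Theorem theorem3 (Pi : finType) (f : nat) (W : {set Pi})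
  (slices : Pi -> {set {set Pi}}) (PD : Pi -> {set Pi})
  (Vsink : {set Pi}) (Vi : Pi -> {set Pi}) :
  (* at most f Byzantine processes F = Pi \ W *)
  #|~: W| <= f ->
  (* Vsink is the unique sink component of G_di *)
  is_sink_component [set: Pi] (fun i j => j \in PD i) Vsink ->
  (forall C, is_sink_component [set: Pi] (fun i j => j \in PD i) C -> C = Vsink) ->
  2 * f + 1 <= #|Vsink :&: W| ->
  (* G_di with F deleted is (f+1)-OSR *)
  k_OSR W (fun i j => j \in PD i) f.+1 ->
  (* slices of correct processes in the sink *)
  (forall i, i \in W -> i \in Vsink ->
     slices i = [set X : {set Pi} | (X \subset Vsink) && (#|X| == (#|Vsink| + f + 1).+1 %/ 2)]) ->
  (* slices of correct processes outside the sink *)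
  (forall i, i \in W -> i \notin Vsink ->
     [/\ Vi i \subset Vsink, f + 1 <= #|Vi i :&: W|
       & slices i = [set X : {set Pi} | (X \subset Vi i) && (#|X| == f + 1)]]) ->
  forall i j, i \in W -> j \in W -> intertwined slices f i j.
Proof.
move=> faulty_le _ _ _ _ sink_slices outer_slices.
apply: (correct_intertwined (Vi := Vi) faulty_le sink_slices) => i iW iV.
by have [ViV _ slices_i] := outer_slices i iW iV; split.
Qed.
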